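(* Let $A,B\in\mathfrak{su}(2)$ satisfy $\operatorname{tr}(AB)=0$, and put $g:=\exp(A)$ and $h:=\exp(B)$. Then \[ gh=hg+h^{-1}g+hg^{-1}-\operatorname{tr}(hg)\,, \] where the scalar $\operatorname{tr}(hg)$ is understood as $\operatorname{tr}(hg)$ times the $2\times 2$ identity matrix.
   Context: $\mathfrak{su}(2)$ denotes the Lie algebra of traceless anti-Hermitian $2\times 2$ complex matrices, $\exp$ is the matrix exponential, and $\operatorname{tr}$ is the ordinary matrix trace. *)

From HB Require Import structures.
From mathcomp Require Import all_boot all_order all_algebra.
From mathcomp Require Export complex.
From mathcomp Require Import all_classical all_reals all_analysis.
Set Implicit Arguments. Unset Strict Implicit. Unset Printing Implicit Defensive.
Import Order.TTheory GRing.Theory Num.Theory.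
Import numFieldNormedType.Exports.
Local Open Scope ring_scope.
Local Open Scope complex_scope.

Definition adjmx (R : rcfType) (n : nat) (A : 'M[R[i]]_n) : 'M[R[i]]_n :=
  map_mx (fun z => z^*) A^T.

Definition su2 (R : rcfType) (A : 'M[R[i]]_2) : Prop :=
  adjmx A = - A /\ \tr A = 0.

Definition expmx (R : realType) (A : 'M[R[i]]_2) : 'M[R[i]]_2 :=
  limn (series (fun k : nat => (k`!%:R)^-1 *: A ^+ k)).

From HB Require Import structures.
From mathcomp Require Import all_boot all_order all_algebra.
From mathcomp Require Import complex.
From mathcomp Require Import all_classical all_reals all_analysis.
From mathcomp Require Import ring.
Import Order.TTheory GRing.Theory Num.Theory.
Import numFieldNormedType.Exports.
Local Open Scope ring_scope.
Local Open Scope classical_set_scope.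

(* For X in su(2), Cayley-Hamilton gives X^2 = - det X with det X = th^2 >= 0,
   so exp X = cos th + (sin th / th) X lies in span(1, X) and has determinant
   cos^2 th + sin^2 th = 1.  For 2x2 matrices of determinant 1 the inverse is
   tr g - g, and the polarized Cayley-Hamilton identity
   gh + hg = tr h g + tr g h + (tr (gh) - tr g tr h)
   reduces the claim to 2 tr (gh) = tr g tr h, which holds for g = a + sA and
   h = b + tB because tr A = tr B = tr (AB) = 0. *)

Lemma ord2P (i : 'I_2) : i = 0 \/ i = 1.
Proof. by case: i => -[|[|//]] ?; [left | right]; apply/val_inj. Qed.

Lemma matrix2P {T : Type} (A B : 'M[T]_2) :
  A 0 0 = B 0 0 -> A 0 1 = B 0 1 -> A 1 0 = B 1 0 -> A 1 1 = B 1 1 -> A = B.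
Proof.
move=> e00 e01 e10 e11; apply/matrixP => i j.
by case: (ord2P i) => ->; case: (ord2P j) => ->.
Qed.

Lemma sum_ord2 {V : nmodType} (F : 'I_2 -> V) : \sum_(j < 2) F j = F 0 + F 1.
Proof. by rewrite big_ord_recl big_ord1; congr (_ + F _); apply/val_inj. Qed.

Lemma mxtrace2 {V : nmodType} (A : 'M[V]_2) : \tr A = A 0 0 + A 1 1.
Proof. exact: sum_ord2. Qed.

Section TwoByTwo.
Context {R : comNzRingType}.
Implicit Types (A B X Y : 'M[R]_2) (a b s t : R).

Lemma det_mx2 A : \det A = A 0 0 * A 1 1 - A 0 1 * A 1 0.
Proof.
rewrite (expand_det_row _ 0) sum_ord2 /cofactor !det_mx11 !mxE /=.
have -> : lift 0 (0 : 'I_1) = 1 by apply/val_inj.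
have -> : lift 1 (0 : 'I_1) = 0 by apply/val_inj.
rewrite expr0 expr1; ring.
Qed.

Ltac entrywise :=
  apply: matrix2P; rewrite !(mxE, sum_ord2, mxtrace2, det_mx2) /=; ring.

Lemma Cayley_Hamilton2 A : A *m A = \tr A *: A - (\det A)%:M.
Proof. entrywise. Qed.

Lemma Cayley_Hamilton2_polar A B :
  A *m B + B *m A = \tr B *: A + \tr A *: B + (\tr (A *m B) - \tr A * \tr B)%:M.
Proof. entrywise. Qed.

Lemma mulmx_tr_sub2 A : A *m ((\tr A)%:M - A) = (\det A)%:M.
Proof. entrywise. Qed.

Lemma det_scalar_addZ_mx2 a s X :
  \det (a%:M + s *: X) = a ^+ 2 + a * s * \tr X + s ^+ 2 * \det X.
Proof. rewrite !(mxE, mxtrace2, det_mx2) /=; ring. Qed.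

Lemma mxtrace_mul_scalar_addZ_mx2 a b s t X Y :
  \tr ((a%:M + s *: X) *m (b%:M + t *: Y)) =
  (a * b) *+ 2 + a * t * \tr Y + s * b * \tr X + s * t * \tr (X *m Y).
Proof. rewrite !(mxE, sum_ord2, mxtrace2) /=; ring. Qed.

Lemma expr_mx2_tr0 X k : \tr X = 0 ->
  X ^+ k = (- \det X) ^+ k./2 *: (if odd k then X else 1).
Proof.
move=> trX; elim: k => [|k IH]; first by rewrite expr0 scale1r.
rewrite exprSr IH [k.+1./2]/= uphalf_half /=; case: (odd k) => /=.
  rewrite -scalerAl -mulmxE Cayley_Hamilton2 trX scale0r sub0r -raddfN /= -scalemx1.
  by rewrite scalerA -exprSr add1n.
by rewrite add0n -scalerAl mul1r.
Qed.
End TwoByTwo.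

Lemma invmx2_det1 {R : comUnitRingType} (A : 'M[R]_2) :
  \det A = 1 -> invmx A = (\tr A)%:M - A.
Proof.
move=> detA; have AA' := mulmx_tr_sub2 A; rewrite detA in AA'.
have [Aunit _] := mulmx1_unit AA'.
by rewrite -[RHS](mulKmx Aunit) AA' mulmx1.
Qed.

Lemma sl2_trace_orth_identity {R : comUnitRingType} (g h : 'M[R]_2) :
  \det g = 1 -> \det h = 1 -> \tr (g *m h) *+ 2 = \tr g * \tr h ->
  g *m h = h *m g + invmx h *m g + h *m invmx g - (\tr (h *m g))%:M.
Proof.
move=> detg deth trgh.
have scalar_part : \tr (g *m h) - \tr g * \tr h = - \tr (h *m g).
  by rewrite -trgh mulr2n opprD addrA subrr sub0r mxtrace_mulC.
have gh : g *m h = \tr h *: g + \tr g *: h - (\tr (h *m g))%:M - h *m g.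
  by rewrite -raddfN -scalar_part -Cayley_Hamilton2_polar addrK.
rewrite invmx2_det1 // invmx2_det1 // mulmxBl mulmxBr mul_scalar_mx mul_mx_scalar gh.
by rewrite [h *m g + _]addrC subrK addrA [RHS]addrAC.
Qed.

(* If X^2 = -t, then X^k / k! = cos_sqrt_coeff t k + sinc_sqrt_coeff t k * X;
   for t = th^2 the two series sum to cos th and sin th / th. *)
Definition cos_sqrt_coeff {F : fieldType} (t : F) (k : nat) : F :=
  (~~ odd k)%:R * (- t) ^+ k./2 / k`!%:R.

Definition sinc_sqrt_coeff {F : fieldType} (t : F) (k : nat) : F :=
  (odd k)%:R * (- t) ^+ k./2 / k`!%:R.

Lemma rmorph_cos_sqrt_coeff {F K : fieldType} (f : {rmorphism F -> K}) t k :
  f (cos_sqrt_coeff t k) = cos_sqrt_coeff (f t) k.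
Proof. by rewrite /cos_sqrt_coeff fmorph_div !rmorphM !rmorph_nat rmorphXn rmorphN. Qed.

Lemma rmorph_sinc_sqrt_coeff {F K : fieldType} (f : {rmorphism F -> K}) t k :
  f (sinc_sqrt_coeff t k) = sinc_sqrt_coeff (f t) k.
Proof. by rewrite /sinc_sqrt_coeff fmorph_div !rmorphM !rmorph_nat rmorphXn rmorphN. Qed.

Lemma even_or_odd (k : nat) : exists m, k = m.*2 \/ k = m.*2.+1.
Proof.
exists k./2; have := odd_double_half k.
by move: (odd k) (k./2) => [] m <-; [right | left].
Qed.

Section RealSeries.
Context {R : realType}.
Implicit Types th : R.

Lemma cos_coeff_sqr th : cos_coeff th = cos_sqrt_coeff (th ^+ 2).
Proof.
apply/funext => k; rewrite /cos_coeff /cos_sqrt_coeff /= -exprnP.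
have [m [->|->]] := even_or_odd k; rewrite /= odd_double /= ?mul0r //.
by rewrite doubleK -mul2n exprM [in RHS]exprNn mulrA.
Qed.

Lemma sin_coeff_sqr th k : sin_coeff th k = th * sinc_sqrt_coeff (th ^+ 2) k.
Proof.
rewrite /sin_coeff /sinc_sqrt_coeff /=.
have [m [->|->]] := even_or_odd k; rewrite /= odd_double /= ?(mul0r, mulr0) //.
rewrite uphalf_double doubleK exprS -mul2n exprM [in RHS]exprNn; ring.
Qed.

Lemma cvg_series_cos_sqrt th : series (cos_sqrt_coeff (th ^+ 2)) @ \oo --> cos th.
Proof. by rewrite -cos_coeff_sqr cos.unlock; exact: is_cvg_series_cos_coeff. Qed.

Lemma cvg_series_sinc_sqrt th : exists2 s,
  series (sinc_sqrt_coeff (th ^+ 2)) @ \oo --> s & th * s = sin th.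
Proof.
have [->|th0] := eqVneq th 0.
  exists 1; last by rewrite mul0r sin0.
  apply: cvg_near_cst; exists 2%N => // n /= n2.
  rewrite /series /= -(subnKC n2) !big_nat_recl //= big1 => [|k _].
    by rewrite /sinc_sqrt_coeff /= !mul0r !add0r expr0 divr1 mul1r addr0.
  by rewrite /sinc_sqrt_coeff /= expr0n oppr0 expr0n /= !(mulr0, mul0r).
exists (th^-1 * sin th); last by rewrite mulVKf.
have -> : series (sinc_sqrt_coeff (th ^+ 2)) = fun n => th^-1 * series (sin_coeff th) n.
  apply/funext => n; rewrite /series /= mulr_sumr; apply: eq_bigr => k _.
  by rewrite sin_coeff_sqr mulKf.
by apply: cvgMl_tmp; rewrite sin.unlock; exact: is_cvg_series_sin_coeff.
Qed.
End RealSeries.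

Lemma exp_series_mx2_tr0 {F : fieldType} (X : 'M[F]_2) n : \tr X = 0 ->
  series (fun k => (k`!%:R)^-1 *: X ^+ k) n =
  (series (cos_sqrt_coeff (\det X)) n)%:M + series (sinc_sqrt_coeff (\det X)) n *: X.
Proof.
move=> trX; rewrite /series /= raddf_sum scaler_suml -big_split /=.
apply: eq_bigr => k _; rewrite expr_mx2_tr0 // scalerA /cos_sqrt_coeff /sinc_sqrt_coeff.
case: (odd k) => /=; rewrite ?(mul1r, mul0r, scale0r, add0r, addr0, raddf0) mulrC //.
by rewrite -scalemx1.
Qed.

Local Open Scope complex_scope.

Lemma su2_det_ge0 {R : rcfType} (X : 'M[R[i]]_2) : su2 X -> 0 <= \det X.
Proof.
case=> /matrixP adjX trX.
have conjE i j : (X i j)^* = - X j i by have := adjX j i; rewrite !mxE.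
have -> : \det X = `|X 0 0| ^+ 2 + `|X 0 1| ^+ 2.
  rewrite det_mx2 !sqr_normc !conjE.
  have -> : X 1 1 = - X 0 0.
    by apply/eqP; rewrite -addr_eq0 addrC -(mxtrace2 X) trX.
  ring.
by rewrite addr_ge0 ?sqr_ge0.
Qed.

Section MatrixExponential.
Context {R : realType}.
(* The topology of R[i] is only found through its numFieldType structure. *)
Local Notation C := (R[i] : numFieldType).

Lemma cvg_real_complex (u : R^nat) (l : R) :
  u @ \oo --> l -> (fun n => (u n)%:C : C) @ \oo --> (l%:C : C).
Proof.
move=> u_l; apply/cvgrPdist_lt => e e_gt0.
have [Im_e Re_e_gt0] : complex.Im e = 0 /\ 0 < complex.Re e.
  by move: e_gt0; rewrite ltcE => /andP[/eqP ? ?].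
move/cvgrPdist_lt: u_l => /(_ _ Re_e_gt0); apply: filterS => n u_n_near.
by rewrite -rmorphB normc_def /= expr0n /= addr0 sqrtr_sqr ltcE /= Im_e eqxx.
Qed.

Lemma expmx_tr0 (X : 'M[R[i]]_2) (th : R) : \tr X = 0 -> \det X = (th ^+ 2)%:C ->
  exists2 s : R, expmx X = ((cos th)%:C)%:M + s%:C *: X & th * s = sin th.
Proof.
move=> trX detX; have [s cvg_s th_s] := cvg_series_sinc_sqrt th.
exists s => //; apply: norm_cvg_lim; rewrite -scalemx1.
have -> : series (fun k => (k`!%:R)^-1 *: X ^+ k) = fun n =>
    (series (cos_sqrt_coeff (th ^+ 2)) n)%:C *: 1%:M +
    (series (sinc_sqrt_coeff (th ^+ 2)) n)%:C *: X.
  apply/funext => n; rewrite exp_series_mx2_tr0 // detX scalemx1 /series /=.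
  by congr (_%:M + _ *: X); rewrite rmorph_sum; apply: eq_bigr => k _;
    rewrite ?rmorph_cos_sqrt_coeff ?rmorph_sinc_sqrt_coeff.
apply: cvgD; apply: cvgZr_tmp; apply: cvg_real_complex => //.
exact: cvg_series_cos_sqrt.
Qed.

Lemma expmx_su2 (X : 'M[R[i]]_2) : su2 X ->
  exists c s : R[i], expmx X = c%:M + s *: X /\ \det (expmx X) = 1.
Proof.
move=> suX; have [_ trX] := suX; have detX_ge0 := su2_det_ge0 X suX.
have /complex_realP[t detX] := ger0_real detX_ge0.
rewrite detX ler0c in detX_ge0; rewrite -(sqr_sqrtr detX_ge0) in detX.
have [s expX th_s] := expmx_tr0 X _ trX detX.
exists (cos (Num.sqrt t))%:C, s%:C; split => //.
rewrite expX det_scalar_addZ_mx2 trX mulr0 addr0 detX -!rmorphXn -!rmorphM.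
by rewrite -exprMn mulrC th_s -rmorphD cos2Dsin2.
Qed.
End MatrixExponential.

Theorem lemma1 (R : realType) (A B : 'M[R[i]]_2) :
  su2 A -> su2 B -> \tr (A *m B) = 0 ->
  let g := expmx A in
  let h := expmx B in
  g *m h = h *m g + invmx h *m g + h *m invmx g - (\tr (h *m g))%:M.
Proof.
move=> suA suB trAB g h.
have [[a [s [gE detg]]] [_ trA]] := (expmx_su2 A suA, suA).
have [[b [t [hE deth]]] [_ trB]] := (expmx_su2 B suB, suB).
apply: sl2_trace_orth_identity; [exact: detg | exact: deth |].
rewrite /g /h gE hE mxtrace_mul_scalar_addZ_mx2 !mxtraceD !mxtrace_scalar !mxtraceZ.
by rewrite trA trB trAB !mulr0 !addr0 mulrnAl mulrnAr.
Qed.
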